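(* Let $X$ solve $dX_t=\mu_X(X_t;\theta)\,dt+\sigma_X(X_t;\theta)\,dW_t$ on $\mathcal{X}=(x_l,x_r)$ and let $Y_t=V(X_t)$, with structure $\mathcal{S}=(\theta,V)$ ($\theta$ the data-generating parameter). Assume: (a) $\mu_X(\cdot;\theta)$ and $\sigma_X^2(\cdot;\theta)>0$ are twice continuously differentiable; (b) $S(x;\theta)\to-\infty$ as $x\to x_l$ and $S(x;\theta)\to+\infty$ as $x\to x_r$; (c) $\xi(\theta)^{-1}:=\int_{\mathcal{X}}\{\sigma_X^2(x;\theta)s(x;\theta)\}^{-1}dx<\infty$; (d) $V$ is strictly increasing and twice continuously differentiable with inverse $U=V^{-1}$; (e) the drift $\mu_Y$ and diffusion $\sigma_Y^2$ of $Y$ are nonparametrically identified from the discretely sampled process $\{Y_{i\Delta}\}$. With $f_X(x;\vartheta)=\frac{\xi(\vartheta)}{\sigma_X^2(x;\vartheta)s(x;\vartheta)}$, $F_X(x;\vartheta)=\int_{x_l}^x f_X(z;\vartheta)dz$, and $f_X'$ the derivative of $f_X$ in $x$, define for $\bar x\in(0,1)$ $$\mu_{\bar X}(\bar x;\vartheta)=\mu_X(F_X^{-1}(\bar x;\vartheta);\vartheta)f_X(F_X^{-1}(\bar x;\vartheta);\vartheta)+\frac12\sigma_X^2(F_X^{-1}(\bar x;\vartheta);\vartheta)f_X'(F_X^{-1}(\bar x;\vartheta);\vartheta),$$ $$\sigma_{\bar X}(\bar x;\vartheta)=\sigma_X(F_X^{-1}(\bar x;\vartheta);\vartheta)f_X(F_X^{-1}(\bar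 x;\vartheta);\vartheta).$$ Then $\mathcal{S}$ is identified if and only if the following holds: for all $\tilde\theta\in\Theta$, [$\mu_{\bar X}(\bar x;\theta)=\mu_{\bar X}(\bar x;\tilde\theta)$ and $\sigma_{\bar X}(\bar x;\theta)=\sigma_{\bar X}(\bar x;\tilde\theta)$ for all $\bar x\in(0,1)$] if and only if $\theta=\tilde\theta$.
   Context: Scale density and scale measure: $s(x;\theta)=\exp\{-\int_{x^*}^x \frac{2\mu_X(z;\theta)}{\sigma_X^2(z;\theta)}dz\}$, $S(x;\theta)=\int_{x^*}^x s(z;\theta)dz$ for fixed $x^*\in\mathcal{X}$; under (a)–(c), $f_X$ is the stationary density of $X$. For a structure $\mathcal{S}=(\theta,V)$ with $U=V^{-1}$, the drift and diffusion of $Y$ are $\mu_Y(y;\mathcal{S})=\frac{\mu_X(U(y);\theta)}{U'(y)}-\frac12\sigma_X^2(U(y);\theta)\frac{U''(y)}{U'(y)^3}$ and $\sigma_Y(y;\mathcal{S})=\frac{\sigma_X(U(y);\theta)}{U'(y)}$. Two structures are observationally equivalent ($\mathcal{S}\sim\tilde{\mathcal{S}}$) if they yield identical $\mu_Y(\cdot)$ and $\sigma_Y(\cdot)$ on the domain of $Y$. $\mathcal{S}$ is identified (within the model of admissible structures) if $\mathcal{S}\sim\tilde{\mathcal{S}}$ implies $\mathcal{S}=\tilde{\mathcal{S}}$. *)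

From Stdlib Require Import Reals ClassicalEpsilon.
From Coquelicot Require Import Coquelicot.
Open Scope R_scope.

Definition in_dom (xl xr : Rbar) (x : R) : Prop := Rbar_lt xl x /\ Rbar_lt x xr.

Definition left_end (e : Rbar) : (R -> Prop) -> Prop :=
  match e with Finite a => at_right a | _ => Rbar_locally e end.
Definition right_end (e : Rbar) : (R -> Prop) -> Prop :=
  match e with Finite b => at_left b | _ => Rbar_locally e end.

Definition inv_on (f : R -> R) (D : R -> Prop) (y : R) : R :=
  epsilon (inhabits 0) (fun x => D x /\ f x = y).

Definition C2_on (D : R -> Prop) (f : R -> R) : Prop :=
  forall x, D x -> ex_derive f x /\ ex_derive (Derive f) x /\
                   continuous (Derive_n f 2) x.

Section Model.
Variables (Theta : Type) (xl xr : Rbar) (xstar : R)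
          (mu sig : Theta -> R -> R).

Definition sig2 (th : Theta) (x : R) : R := sig th x ^ 2.

Definition scale_dens (th : Theta) (x : R) : R :=
  exp (- RInt (fun z => 2 * mu th z / sig2 th z) xstar x).
Definition scale_meas (th : Theta) (x : R) : R :=
  RInt (scale_dens th) xstar x.

Definition speed_integrand (th : Theta) (x : R) : R :=
  / (sig2 th x * scale_dens th x).

Definition xi (th : Theta) : R :=
  / RInt_gen (speed_integrand th) (left_end xl) (right_end xr).

Definition assumptions_abc (th : Theta) : Prop :=
  C2_on (in_dom xl xr) (mu th) /\ C2_on (in_dom xl xr) (sig2 th) /\
  (forall x, in_dom xl xr x -> 0 < sig2 th x) /\
  filterlim (scale_meas th) (left_end xl) (Rbar_locally m_infty) /\
  filterlim (scale_meas th) (right_end xr) (Rbar_locally p_infty) /\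
  ex_RInt_gen (speed_integrand th) (left_end xl) (right_end xr).

Definition fX (th : Theta) (x : R) : R := xi th / (sig2 th x * scale_dens th x).
Definition FX (th : Theta) (x : R) : R := RInt_gen (fX th) (left_end xl) (at_point x).
Definition FXinv (th : Theta) (u : R) : R := inv_on (FX th) (in_dom xl xr) u.

Definition mu_bar (th : Theta) (u : R) : R :=
  let x := FXinv th u in
  mu th x * fX th x + / 2 * sig2 th x * Derive (fX th) x.
Definition sig_bar (th : Theta) (u : R) : R :=
  let x := FXinv th u in sig th x * fX th x.

Definition admissible_V (V : R -> R) : Prop :=
  (forall x y, in_dom xl xr x -> in_dom xl xr y -> x < y -> V x < V y) /\
  C2_on (in_dom xl xr) V /\
  (forall x, in_dom xl xr x -> 0 < Derive V x).

Definition Ydom (V : R -> R) (y : R) : Prop := exists x, in_dom xl xr x /\ V x = y.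
Definition Uinv (V : R -> R) : R -> R := inv_on V (in_dom xl xr).

Definition mu_Y (th : Theta) (V : R -> R) (y : R) : R :=
  let U := Uinv V in
  mu th (U y) / Derive U y
  - / 2 * sig2 th (U y) * Derive_n U 2 y / (Derive U y) ^ 3.
Definition sig_Y (th : Theta) (V : R -> R) (y : R) : R :=
  let U := Uinv V in sig th (U y) / Derive U y.

Definition obs_equiv (th : Theta) (V : R -> R) (th' : Theta) (V' : R -> R) : Prop :=
  (forall y, Ydom V y <-> Ydom V' y) /\
  (forall y, Ydom V y -> mu_Y th V y = mu_Y th' V' y /\ sig_Y th V y = sig_Y th' V' y).

Definition struct_eq (th : Theta) (V : R -> R) (th' : Theta) (V' : R -> R) : Prop :=
  th = th' /\ forall x, in_dom xl xr x -> V x = V' x.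

Definition identified (th : Theta) (V : R -> R) : Prop :=
  forall th' V', admissible_V V' -> obs_equiv th V th' V' -> struct_eq th V th' V'.

End Model.

From Pilot Require Import Defs.
From Stdlib Require Import Reals Lra Psatz ClassicalEpsilon.
From Coquelicot Require Import Coquelicot.
Open Scope R_scope.

(* Two structures (theta, V) and (theta', W) are observationally equivalent exactly when
   G := W^-1 o V, an increasing C^2 bijection of the state space, carries the diffusion with
   parameter theta onto the one with parameter theta' in the sense of Ito's formula.  Such a
   transport rescales the scale density: G' (s_theta' o G) = C s_theta, so the stationary
   densities satisfy (f_theta' o G) G' = K f_theta and F_theta' o G = K F_theta + c; as both
   distribution functions map the state space onto (0,1), K = 1 and c = 0.  Hence the only
   candidate transport is G = F_theta'^-1 o F_theta, and it is one precisely when the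
   coefficients of the normalised processes F_theta(X) and F_theta'(X), i.e. mu_bar and
   sig_bar, agree. *)

(* Coquelicot's generic lemmas specialised to [R -> R]: stated with [plus], [mult] and
   [scal], the generic forms do not unify with [Rplus] and [Rmult] under [apply]. *)
Lemma continuous_Rplus (f g : R -> R) x :
  continuous f x -> continuous g x -> continuous (fun y => f y + g y) x.
Proof. exact (continuous_plus f g x). Qed.

Lemma continuous_Rmult (f g : R -> R) x :
  continuous f x -> continuous g x -> continuous (fun y => f y * g y) x.
Proof. exact (continuous_mult f g x). Qed.

Lemma continuous_Ropp (f : R -> R) x : continuous f x -> continuous (fun y => - f y) x.
Proof. exact (continuous_opp f x). Qed.

Lemma continuous_Rcomp (f g : R -> R) x :
  continuous g x -> continuous f (g x) -> continuous (fun y => f (g y)) x.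
Proof. exact (continuous_comp g f x). Qed.

Lemma ex_derive_continuous_R (f : R -> R) x : ex_derive f x -> continuous f x.
Proof. exact (ex_derive_continuous f x). Qed.

Lemma is_derive_Rmult (f g : R -> R) x df dg :
  is_derive f x df -> is_derive g x dg -> is_derive (fun y => f y * g y) x (df * g x + f x * dg).
Proof. intros Hf Hg; exact (is_derive_mult f g x df dg Hf Hg Rmult_comm). Qed.

Lemma is_derive_Rcomp (f g : R -> R) x df dg :
  is_derive f (g x) df -> is_derive g x dg -> is_derive (fun y => f (g y)) x (df * dg).
Proof. intros Hf Hg; rewrite Rmult_comm; exact (is_derive_comp f g x df dg Hf Hg). Qed.

Lemma filterlim_Rcomp {T} (F : (T -> Prop) -> Prop) (h : T -> R) (k : R -> R) l :
  filterlim h F (locally l) -> continuous k l -> filterlim (fun t => k (h t)) F (locally (k l)).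
Proof. intros Hh Hk; exact (filterlim_comp _ _ _ h k F (locally l) _ Hh Hk). Qed.

Lemma continuous_Rpow (f : R -> R) (n : nat) x :
  continuous f x -> continuous (fun y => f y ^ n) x.
Proof.
  intros Hf; induction n as [| n IH]; simpl; [apply continuous_const | apply continuous_Rmult; auto].
Qed.

Lemma locally_of_open (D P : R -> Prop) x : open D -> D x -> (forall y, D y -> P y) -> locally x P.
Proof. intros HD Hx HP; exact (filter_imp D P HP (HD x Hx)). Qed.

Lemma filterlim_lt_eventually {T} (F : (T -> Prop) -> Prop) (h : T -> R) l m :
  filterlim h F (locally l) -> l < m -> F (fun t => h t < m).
Proof. intros Hh Hlm; apply (Hh (fun u => u < m)), (open_Rbar_lt m); exact Hlm. Qed.

Lemma filterlim_gt_eventually {T} (F : (T -> Prop) -> Prop) (h : T -> R) l m :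
  filterlim h F (locally l) -> m < l -> F (fun t => m < h t).
Proof. intros Hh Hml; apply (Hh (fun u => m < u)), (open_Rbar_gt m); exact Hml. Qed.

Lemma ball_R_between (x e y : R) : ball x e y <-> x - e < y < x + e.
Proof. exact (Rabs_lt_between' y x e). Qed.

(* Fixing [b] shows that [phi] is Cauchy along [Fa]; completeness of [R] does the rest. *)
Lemma filterlim_plus_prod_split {T U : Type}
  (Fa : (T -> Prop) -> Prop) (Fb : (U -> Prop) -> Prop)
  {FFa : ProperFilter Fa} {FFb : ProperFilter Fb} (phi : T -> R) (psi : U -> R) (L : R) :
  filterlim (fun ab : T * U => phi (fst ab) + psi (snd ab)) (filter_prod Fa Fb) (locally L) ->
  exists l, filterlim phi Fa (locally l) /\ filterlim psi Fb (locally (L - l)).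
Proof.
  intros HL.
  assert (Hclose : forall eps : posreal, exists P Q, Fa P /\ Fb Q /\
            forall a b, P a -> Q b -> L - eps < phi a + psi b < L + eps).
  { intros eps; destruct (proj1 (filterlim_locally _ L) HL eps) as [P Q HP HQ HPQ].
    exists P, Q; do 2 (split; [assumption |]).
    intros a b Ha Hb; apply ball_R_between, (HPQ a b Ha Hb). }
  assert (Hcauchy : cauchy (filtermap phi Fa)).
  { intros eps; destruct (Hclose (pos_div_2 eps)) as [P [Q [HP [HQ HPQ]]]].
    destruct (filter_ex _ HP) as [a0 Ha0]; destruct (filter_ex _ HQ) as [b0 Hb0].
    exists (phi a0); unfold filtermap; apply (filter_imp P); [| exact HP].
    intros a Ha; apply ball_R_between.
    pose proof (HPQ a b0 Ha Hb0); pose proof (HPQ a0 b0 Ha0 Hb0); simpl in *; lra. }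
  set (l := lim (filtermap phi Fa)).
  assert (Hl : filterlim phi Fa (locally l)).
  { apply filterlim_locally; intros eps.
    exact (complete_cauchy (filtermap phi Fa) _ Hcauchy eps). }
  exists l; split; auto.
  apply filterlim_locally; intros eps.
  destruct (Hclose (pos_div_2 eps)) as [P [Q [HP [HQ HPQ]]]].
  pose proof (proj1 (filterlim_locally _ l) Hl (pos_div_2 eps)) as Hl'.
  destruct (filter_ex _ (filter_and _ _ HP Hl')) as [a [Ha Hla]].
  apply (filter_imp Q); [| exact HQ]; intros b Hb.
  apply ball_R_between in Hla; apply ball_R_between.
  pose proof (HPQ a b Ha Hb); simpl in *; lra.
Qed.

#[export] Instance left_end_proper (e : Rbar) : ProperFilter (left_end e).
Proof. destruct e; [apply at_right_proper_filter | apply Rbar_locally_filter ..]. Qed.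

#[export] Instance right_end_proper (e : Rbar) : ProperFilter (right_end e).
Proof. destruct e; [apply at_left_proper_filter | apply Rbar_locally_filter ..]. Qed.

Section OpenInterval.
Variables xl xr : Rbar.
Local Notation D := (in_dom xl xr).

Lemma in_dom_open : open D.
Proof. exact (open_and _ _ (open_Rbar_gt xl) (open_Rbar_lt xr)). Qed.

Lemma in_dom_between a b : D a -> D b -> forall z, a <= z <= b -> D z.
Proof.
  intros [Ha _] [_ Hb] z [Haz Hzb]; split.
  - apply Rbar_lt_le_trans with a; [exact Ha | exact Haz].
  - apply Rbar_le_lt_trans with b; [exact Hzb | exact Hb].
Qed.

Lemma in_dom_exists_lt x : D x -> exists a, D a /\ a < x.
Proof.
  intros Hx; destruct (in_dom_open x Hx) as [e He].
  exists (x - e / 2); split; [apply He, ball_R_between |]; destruct e; simpl; lra.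
Qed.

Lemma in_dom_exists_gt x : D x -> exists b, D b /\ x < b.
Proof.
  intros Hx; destruct (in_dom_open x Hx) as [e He].
  exists (x + e / 2); split; [apply He, ball_R_between |]; destruct e; simpl; lra.
Qed.

Lemma left_end_in_dom_lt a0 : D a0 -> left_end xl (fun a => D a /\ a < a0).
Proof.
  intros Ha0; pose proof Ha0 as [Hl Hr].
  assert (Hin : forall a : R, Rbar_lt xl a -> a < a0 -> D a /\ a < a0).
  { intros a Ha Haa0; split; [split; [exact Ha |] | exact Haa0].
    apply Rbar_le_lt_trans with a0; [simpl; lra | exact Hr]. }
  destruct xl as [l | |]; simpl in Hl |- *; try contradiction.
  - assert (He : 0 < a0 - l) by lra. exists (mkposreal _ He); simpl.
    intros a Ha Hla; apply ball_R_between in Ha; apply Hin; simpl; lra.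
  - exists a0; intros a Ha; apply Hin; simpl; auto.
Qed.

Lemma right_end_in_dom_gt b0 : D b0 -> right_end xr (fun b => D b /\ b0 < b).
Proof.
  intros Hb0; pose proof Hb0 as [Hl Hr].
  assert (Hin : forall b : R, Rbar_lt b xr -> b0 < b -> D b /\ b0 < b).
  { intros b Hb Hbb0; split; [split; [| exact Hb] | exact Hbb0].
    apply Rbar_lt_le_trans with b0; [exact Hl | simpl; lra]. }
  destruct xr as [r | |]; simpl in Hr |- *; try contradiction.
  - assert (He : 0 < r - b0) by lra. exists (mkposreal _ He); simpl.
    intros b Hb Hbr; apply ball_R_between in Hb; apply Hin; simpl; lra.
  - exists b0; intros b Hb; apply Hin; simpl; auto.
Qed.

Section ContinuousOn.
Variable f : R -> R.
Hypothesis f_cont : forall x, D x -> continuous f x.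

Lemma ex_RInt_in_dom a b : D a -> D b -> ex_RInt f a b.
Proof.
  intros Ha Hb; apply (@ex_RInt_continuous R_CompleteNormedModule); intros z Hz; apply f_cont.
  destruct (Rle_dec a b).
  - rewrite Rmin_left, Rmax_right in Hz by lra; exact (in_dom_between a b Ha Hb z Hz).
  - rewrite Rmin_right, Rmax_left in Hz by lra; exact (in_dom_between b a Hb Ha z Hz).
Qed.

Lemma RInt_Chasles_in_dom a b c : D a -> D b -> D c -> RInt f a b + RInt f b c = RInt f a c.
Proof.
  intros Ha Hb Hc.
  exact (@RInt_Chasles R_CompleteNormedModule f a b c
           (ex_RInt_in_dom a b Ha Hb) (ex_RInt_in_dom b c Hb Hc)).
Qed.

Lemma is_derive_RInt_in_dom a x : D a -> D x -> is_derive (fun y => RInt f a y) x (f x).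
Proof.
  intros Ha Hx; apply (is_derive_RInt f _ a x); [| exact (f_cont x Hx)].
  apply (filter_imp D); [| exact (in_dom_open x Hx)].
  intros y Hy; exact (@RInt_correct R_CompleteNormedModule f a y (ex_RInt_in_dom a y Ha Hy)).
Qed.

End ContinuousOn.

Lemma eq_is_derive_in_dom (f : R -> R) a b :
  (forall x, D x -> is_derive f x 0) -> D a -> D b -> f a = f b.
Proof.
  intros Hf Ha Hb.
  assert (Hab : forall a b, D a -> D b -> a < b -> f a = f b).
  { intros u v Hu Hv Huv; apply (eq_is_derive f u v); [| exact Huv].
    intros t Ht; apply Hf, (in_dom_between u v Hu Hv t Ht). }
  destruct (Rtotal_order a b) as [H | [-> | H]];
    [exact (Hab a b Ha Hb H) | reflexivity | exact (eq_sym (Hab b a Hb Ha H))].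
Qed.

Lemma incr_on_of_is_derive_pos (f df : R -> R) :
  (forall x, D x -> is_derive f x (df x)) -> (forall x, D x -> 0 < df x) ->
  forall x y, D x -> D y -> x < y -> f x < f y.
Proof.
  intros Hf Hpos x y Hx Hy Hxy.
  assert (Hin : forall z, x <= z <= y -> D z) by exact (in_dom_between x y Hx Hy).
  destruct (MVT_gen f x y df) as [c [Hc Hfc]].
  - intros z Hz; apply Hf, Hin; rewrite Rmin_left, Rmax_right in Hz; lra.
  - intros z Hz; rewrite Rmin_left, Rmax_right in Hz by lra.
    apply continuity_pt_filterlim, ex_derive_continuous_R, (ex_intro _ _ (Hf z (Hin z Hz))).
  - rewrite Rmin_left, Rmax_right in Hc by lra.
    pose proof (Hpos c (Hin c Hc)); nra.
Qed.

End OpenInterval.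

Section IncreasingOn.
Variables (xl xr : Rbar) (f : R -> R).
Local Notation D := (in_dom xl xr).
Local Notation g := (inv_on f (in_dom xl xr)).
Local Notation Im := (Ydom xl xr f).

Lemma inv_on_spec y : Im y -> D (g y) /\ f (g y) = y.
Proof. exact (epsilon_spec (inhabits 0) (fun x => D x /\ f x = y)). Qed.

Hypothesis f_incr : forall x y, D x -> D y -> x < y -> f x < f y.

Lemma incr_on_lt_rev x y : D x -> D y -> f x < f y -> x < y.
Proof.
  intros Hx Hy Hf; destruct (Rlt_le_dec x y) as [H | H]; [exact H |].
  destruct (Rle_lt_or_eq_dec _ _ H) as [H' | ->]; [pose proof (f_incr y x Hy Hx H') |]; lra.
Qed.

Lemma incr_on_inj x y : D x -> D y -> f x = f y -> x = y.
Proof.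
  intros Hx Hy E; destruct (Rtotal_order x y) as [H | [H | H]]; [| exact H |];
    [pose proof (f_incr x y Hx Hy H) | pose proof (f_incr y x Hy Hx H)]; lra.
Qed.

Lemma inv_on_cancel x : D x -> g (f x) = x.
Proof.
  intros Hx; destruct (inv_on_spec (f x)) as [Hg Hfg]; [exists x; auto |].
  exact (incr_on_inj _ _ Hg Hx Hfg).
Qed.

Lemma inv_on_incr y z : Im y -> Im z -> y < z -> g y < g z.
Proof.
  intros Hy Hz Hyz.
  destruct (inv_on_spec y Hy) as [Hgy Ey]; destruct (inv_on_spec z Hz) as [Hgz Ez].
  apply incr_on_lt_rev; [exact Hgy | exact Hgz | lra].
Qed.

Section Continuous.
Hypothesis f_cont : forall x, D x -> continuous f x.

Lemma Ydom_between a b y : D a -> D b -> f a <= y <= f b -> Im y.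
Proof.
  intros Ha Hb Hy.
  destruct (Rle_lt_or_eq_dec _ _ (proj1 Hy)) as [Hay | <-]; [| exists a; auto].
  destruct (Rle_lt_or_eq_dec _ _ (proj2 Hy)) as [Hyb | ->]; [| exists b; auto].
  assert (Hab : a < b) by (apply incr_on_lt_rev; auto; lra).
  destruct (Ranalysis5.IVT_interv (fun t => f t - y) a b) as [x [Hx Hfx]]; try lra.
  - intros t Ht; apply continuity_pt_minus; [| apply continuity_pt_const; intros u v; reflexivity].
    apply continuity_pt_filterlim, f_cont, (in_dom_between xl xr a b Ha Hb t Ht).
  - exists x; split; [exact (in_dom_between xl xr a b Ha Hb x Hx) | lra].
Qed.

Lemma Ydom_locally y : Im y -> locally y Im.
Proof.
  intros [x [Hx <-]].
  destruct (in_dom_exists_lt xl xr x Hx) as [a [Ha Hax]].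
  destruct (in_dom_exists_gt xl xr x Hx) as [b [Hb Hxb]].
  apply (filter_imp (fun u : R => Rbar_lt (f a) u /\ Rbar_lt u (f b))).
  - intros u [Hau Hub]; simpl in Hau, Hub; apply (Ydom_between a b); auto; lra.
  - apply (open_and _ _ (open_Rbar_gt (f a)) (open_Rbar_lt (f b))); simpl; split; apply f_incr; auto.
Qed.

Lemma Ydom_limits x0 l r : D x0 ->
  filterlim f (left_end xl) (locally l) -> filterlim f (right_end xr) (locally r) ->
  forall y, Im y <-> l < y < r.
Proof.
  intros Hx0 Hl Hr y; split.
  - intros [x [Hx <-]].
    destruct (in_dom_exists_lt xl xr x Hx) as [a [Ha Hax]].
    destruct (in_dom_exists_gt xl xr x Hx) as [b [Hb Hxb]].
    assert (Hla : Rbar_le l (f a)).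
    { apply (@filterlim_le _ _ (Proper_StrongProper _ (left_end_proper xl)) f (fun _ => f a));
        [| exact Hl | apply filterlim_const].
      apply (filter_imp (fun a' => D a' /\ a' < a)); [| exact (left_end_in_dom_lt xl xr a Ha)].
      intros a' [Ha' Ha'a]; left; auto. }
    assert (Hbr : Rbar_le (f b) r).
    { apply (@filterlim_le _ _ (Proper_StrongProper _ (right_end_proper xr)) (fun _ => f b) f);
        [| apply filterlim_const | exact Hr].
      apply (filter_imp (fun b' => D b' /\ b < b')); [| exact (right_end_in_dom_gt xl xr b Hb)].
      intros b' [Hb' Hbb']; left; auto. }
    simpl in Hla, Hbr; pose proof (f_incr a x Ha Hx Hax); pose proof (f_incr x b Hx Hb Hxb); lra.
  - intros [Hly Hyr].
    destruct (filter_ex _ (filter_and _ _ (left_end_in_dom_lt xl xr x0 Hx0)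
                              (filterlim_lt_eventually _ _ _ _ Hl Hly))) as [a [[Ha _] Hay]].
    destruct (filter_ex _ (filter_and _ _ (right_end_in_dom_gt xl xr x0 Hx0)
                              (filterlim_gt_eventually _ _ _ _ Hr Hyr))) as [b [[Hb _] Hby]].
    apply (Ydom_between a b); auto; lra.
Qed.

End Continuous.

Hypothesis f_der : forall x, D x -> ex_derive f x.

Let f_cont x (Hx : D x) : continuous f x := ex_derive_continuous_R f x (f_der x Hx).

Lemma is_derive_inv_on x0 : D x0 -> Derive f x0 <> 0 -> is_derive g (f x0) (/ Derive f x0).
Proof.
  intros Hx0 Hd.
  destruct (in_dom_exists_lt xl xr x0 Hx0) as [a [Ha Hax]].
  destruct (in_dom_exists_gt xl xr x0 Hx0) as [b [Hb Hxb]].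
  pose proof (f_incr a x0 Ha Hx0 Hax); pose proof (f_incr x0 b Hx0 Hb Hxb).
  assert (Hab : forall z, a <= z <= b -> D z) by exact (in_dom_between xl xr a b Ha Hb).
  assert (Hfg : forall y, f a <= y <= f b -> D (g y) /\ f (g y) = y)
    by (intros y Hy; apply inv_on_spec, (Ydom_between f_cont a b); auto).
  assert (Hg_cont : continuity_pt g (f x0)).
  { apply (Ranalysis5.continuity_pt_recip_interv f g a b); try lra.
    - intros x y Hx Hxy Hy; apply f_incr; auto; apply Hab; lra.
    - intros y Hay Hyb; exact (proj2 (Hfg y (conj Hay Hyb))).
    - intros y Hay Hyb; destruct (Hfg y (conj Hay Hyb)) as [Hgy Efg].
      split; [apply Rnot_lt_le; intros Hlt | apply Rnot_lt_le; intros Hlt];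
        [pose proof (f_incr _ _ Hgy Ha Hlt) | pose proof (f_incr _ _ Hb Hgy Hlt)]; lra.
    - intros t Ht; apply continuity_pt_filterlim, f_cont, Hab, Ht. }
  assert (Hder : forall z, g (f a) <= z <= g (f b) -> derivable_pt f z).
  { intros z Hz; rewrite !inv_on_cancel in Hz by auto; apply ex_derive_Reals_0, f_der, Hab, Hz. }
  assert (Hx0_in : g (f a) <= g (f x0) <= g (f b)) by (rewrite !inv_on_cancel by auto; lra).
  pose proof (Ranalysis5.derivable_pt_lim_recip_interv f g (f a) (f b) (f x0) Hder Hg_cont
                ltac:(lra) ltac:(lra) Hx0_in (fun y Hy => proj2 (Hfg y Hy))) as Hlim.
  rewrite Derive_Reals, inv_on_cancel in Hlim by auto.
  apply is_derive_Reals; rewrite <- (Rmult_1_l (/ _)); exact (Hlim Hd).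
Qed.

End IncreasingOn.

Section C2Facts.
Variables (D : R -> Prop) (f : R -> R).
Hypothesis f_C2 : C2_on D f.

Lemma C2_on_is_derive x : D x -> is_derive f x (Derive f x).
Proof. intros Hx; apply Derive_correct, f_C2, Hx. Qed.

Lemma C2_on_is_derive2 x : D x -> is_derive (Derive f) x (Derive_n f 2 x).
Proof. intros Hx; apply Derive_correct, f_C2, Hx. Qed.

Lemma C2_on_continuous x : D x -> continuous f x.
Proof. intros Hx; apply ex_derive_continuous_R, f_C2, Hx. Qed.

Lemma C2_on_continuous_Derive x : D x -> continuous (Derive f) x.
Proof. intros Hx; apply ex_derive_continuous_R, f_C2, Hx. Qed.

End C2Facts.

Definition C1_on (D : R -> Prop) (f : R -> R) : Prop :=
  forall x, D x -> ex_derive f x /\ continuous (Derive f) x.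

Section C1Facts.
Variable D : R -> Prop.
Hypothesis D_open : open D.

Lemma C1_on_of_C2_on f : C2_on D f -> C1_on D f.
Proof. intros Hf x Hx; split; [apply Hf, Hx | apply (C2_on_continuous_Derive D f Hf x Hx)]. Qed.

Lemma C2_on_of_is_derive_C1 (F f : R -> R) :
  (forall x, D x -> is_derive F x (f x)) -> C1_on D f -> C2_on D F.
Proof.
  intros HF Hf x Hx.
  assert (HDF : locally x (fun y => f y = Derive F y))
    by (apply (locally_of_open D); auto; intros y Hy; symmetry; apply is_derive_unique, HF, Hy).
  split; [exists (f x); apply HF, Hx | split].
  - apply (ex_derive_ext_loc f); [exact HDF | apply Hf, Hx].
  - apply (continuous_ext_loc _ (Derive f)); [| apply Hf, Hx].
    apply (filter_imp (fun y => locally y (fun z => f z = Derive F z))).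
    + intros y Hy; exact (Derive_ext_loc _ _ y Hy).
    + apply (locally_of_open D); auto; intros y Hy.
      apply (locally_of_open D); auto; intros z Hz; symmetry; apply is_derive_unique, HF, Hz.
Qed.

Lemma C1_on_of_is_derive (f df : R -> R) :
  (forall x, D x -> is_derive f x (df x)) -> (forall x, D x -> continuous df x) -> C1_on D f.
Proof.
  intros Hf Hdf x Hx; split; [exists (df x); apply Hf, Hx |].
  apply (continuous_ext_loc _ df); [| apply Hdf, Hx].
  apply (locally_of_open D); auto; intros y Hy; symmetry; apply is_derive_unique, Hf, Hy.
Qed.

Lemma C1_on_mult f g : C1_on D f -> C1_on D g -> C1_on D (fun x => f x * g x).
Proof.
  intros Hf Hg.
  apply (C1_on_of_is_derive _ (fun x => Derive f x * g x + f x * Derive g x)).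
  - intros x Hx; apply is_derive_Rmult; apply Derive_correct; [apply Hf | apply Hg]; exact Hx.
  - intros x Hx; destruct (Hf x Hx) as [Hf1 Hf2]; destruct (Hg x Hx) as [Hg1 Hg2].
    apply continuous_Rplus; apply continuous_Rmult; auto; apply ex_derive_continuous_R; auto.
Qed.

Lemma C1_on_inv f : C1_on D f -> (forall x, D x -> f x <> 0) -> C1_on D (fun x => / f x).
Proof.
  intros Hf Hf0.
  apply (C1_on_of_is_derive _ (fun x => - Derive f x / f x ^ 2)).
  - intros x Hx; apply is_derive_inv; [apply Derive_correct, Hf, Hx | apply Hf0, Hx].
  - intros x Hx; destruct (Hf x Hx) as [Hf1 Hf2].
    assert (Hc : continuous f x) by (apply ex_derive_continuous_R; exact Hf1).
    apply continuous_Rmult; [apply continuous_Ropp; exact Hf2 |].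
    apply continuous_Rinv_comp; [| apply pow_nonzero, Hf0, Hx].
    apply continuous_Rpow, Hc.
Qed.

Lemma C1_on_scal (c : R) f : C1_on D f -> C1_on D (fun x => c * f x).
Proof.
  intros Hf; apply (C1_on_of_is_derive _ (fun x => c * Derive f x)).
  - intros x Hx; apply is_derive_scal, Derive_correct, Hf, Hx.
  - intros x Hx; apply continuous_Rmult; [apply continuous_const | apply Hf, Hx].
Qed.

End C1Facts.

Section C2Comp.
Variables (D E : R -> Prop) (f g : R -> R).
Hypothesis D_open : open D.
Hypothesis f_C2 : C2_on E f.
Hypothesis g_C2 : C2_on D g.
Hypothesis g_maps : forall x, D x -> E (g x).

Lemma is_derive_comp_on x : D x -> is_derive (fun y => f (g y)) x (Derive f (g x) * Derive g x).
Proof.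
  intros Hx; apply is_derive_Rcomp; [apply (C2_on_is_derive E f) | apply (C2_on_is_derive D g)]; auto.
Qed.

Lemma Derive_comp_on x : D x -> Derive (fun y => f (g y)) x = Derive f (g x) * Derive g x.
Proof. intros Hx; apply is_derive_unique, is_derive_comp_on, Hx. Qed.

Lemma is_derive_Derive_comp_on x : D x ->
  is_derive (Derive (fun y => f (g y))) x
    (Derive_n f 2 (g x) * Derive g x ^ 2 + Derive f (g x) * Derive_n g 2 x).
Proof.
  intros Hx.
  apply (is_derive_ext_loc (fun y => Derive f (g y) * Derive g y)).
  { apply (locally_of_open D); auto; intros y Hy; symmetry; apply Derive_comp_on, Hy. }
  replace (Derive_n f 2 (g x) * Derive g x ^ 2 + Derive f (g x) * Derive_n g 2 x)
    with (Derive_n f 2 (g x) * Derive g x * Derive g x + Derive f (g x) * Derive_n g 2 x) by ring.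
  apply (is_derive_Rmult (fun y => Derive f (g y)) (Derive g));
    [apply (is_derive_Rcomp (Derive f) g) | apply (C2_on_is_derive2 D g g_C2 x Hx)].
  - apply (C2_on_is_derive2 E f f_C2), g_maps, Hx.
  - apply (C2_on_is_derive D g g_C2 x Hx).
Qed.

Lemma Derive2_comp_on x : D x ->
  Derive_n (fun y => f (g y)) 2 x =
    Derive_n f 2 (g x) * Derive g x ^ 2 + Derive f (g x) * Derive_n g 2 x.
Proof. intros Hx; apply is_derive_unique, is_derive_Derive_comp_on, Hx. Qed.

Lemma C2_on_comp : C2_on D (fun y => f (g y)).
Proof.
  intros x Hx; split; [eexists; apply is_derive_comp_on, Hx |].
  split; [eexists; apply is_derive_Derive_comp_on, Hx |].
  apply (continuous_ext_loc _
           (fun y => Derive_n f 2 (g y) * Derive g y ^ 2 + Derive f (g y) * Derive_n g 2 y)).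
  { apply (locally_of_open D); auto; intros y Hy; symmetry; apply Derive2_comp_on, Hy. }
  assert (Hg : continuous g x) by (apply (C2_on_continuous D g); auto).
  assert (Hg' : continuous (Derive g) x) by (apply (C2_on_continuous_Derive D g); auto).
  apply continuous_Rplus; apply continuous_Rmult.
  - apply continuous_Rcomp; [exact Hg | apply f_C2, g_maps, Hx].
  - apply continuous_Rpow, Hg'.
  - apply continuous_Rcomp; [exact Hg | apply (C2_on_continuous_Derive E f); auto].
  - apply g_C2, Hx.
Qed.

End C2Comp.

Section C2Inverse.
Variables (xl xr : Rbar) (f : R -> R).
Local Notation D := (in_dom xl xr).
Local Notation g := (inv_on f (in_dom xl xr)).
Local Notation Im := (Ydom xl xr f).
Hypothesis f_incr : forall x y, D x -> D y -> x < y -> f x < f y.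
Hypothesis f_C2 : C2_on D f.
Hypothesis f_pos : forall x, D x -> 0 < Derive f x.

Let f_der x (Hx : D x) : ex_derive f x := proj1 (f_C2 x Hx).
Let f_cont x (Hx : D x) : continuous f x := ex_derive_continuous_R f x (f_der x Hx).

Lemma is_derive_inv_on_Ydom y : Im y -> is_derive g y (/ Derive f (g y)).
Proof.
  intros Hy; destruct (inv_on_spec xl xr f y Hy) as [Hgy Efg].
  pose proof (f_pos _ Hgy).
  pose proof (is_derive_inv_on xl xr f f_incr f_der (g y) Hgy ltac:(lra)) as Hg.
  rewrite Efg in Hg; exact Hg.
Qed.

Lemma Derive_inv_on y : Im y -> Derive g y = / Derive f (g y).
Proof. intros Hy; apply is_derive_unique, is_derive_inv_on_Ydom, Hy. Qed.

Lemma is_derive_Derive_inv_on y : Im y ->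
  is_derive (Derive g) y (- Derive_n f 2 (g y) / Derive f (g y) ^ 3).
Proof.
  intros Hy; destruct (inv_on_spec xl xr f y Hy) as [Hgy _]; pose proof (f_pos _ Hgy).
  apply (is_derive_ext_loc (fun z => / Derive f (g z))).
  { apply (filter_imp Im); [| exact (Ydom_locally xl xr f f_incr f_cont y Hy)].
    intros z Hz; symmetry; apply Derive_inv_on, Hz. }
  replace (- Derive_n f 2 (g y) / Derive f (g y) ^ 3)
    with (- (Derive_n f 2 (g y) * / Derive f (g y)) / Derive f (g y) ^ 2) by (field; lra).
  apply (is_derive_inv (fun z => Derive f (g z))); [| lra].
  apply (is_derive_Rcomp (Derive f) g);
    [apply (C2_on_is_derive2 D f f_C2 _ Hgy) | apply is_derive_inv_on_Ydom, Hy].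
Qed.

Lemma Derive2_inv_on y : Im y -> Derive_n g 2 y = - Derive_n f 2 (g y) / Derive f (g y) ^ 3.
Proof. intros Hy; apply is_derive_unique, is_derive_Derive_inv_on, Hy. Qed.

Lemma C2_on_inv_on : C2_on Im g.
Proof.
  intros y Hy; destruct (inv_on_spec xl xr f y Hy) as [Hgy _]; pose proof (f_pos _ Hgy).
  assert (Hg : continuous g y)
    by (apply ex_derive_continuous_R; eexists; apply is_derive_inv_on_Ydom, Hy).
  split; [eexists; apply is_derive_inv_on_Ydom, Hy |].
  split; [eexists; apply is_derive_Derive_inv_on, Hy |].
  apply (continuous_ext_loc _ (fun z => - Derive_n f 2 (g z) / Derive f (g z) ^ 3)).
  { apply (filter_imp Im); [| exact (Ydom_locally xl xr f f_incr f_cont y Hy)].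
    intros z Hz; symmetry; apply Derive2_inv_on, Hz. }
  assert (Hf' : continuous (fun z => Derive f (g z)) y)
    by (apply continuous_Rcomp; [exact Hg | apply (C2_on_continuous_Derive D f f_C2 _ Hgy)]).
  apply continuous_Rmult.
  - apply continuous_Ropp, continuous_Rcomp; [exact Hg | apply f_C2, Hgy].
  - apply continuous_Rinv_comp; [| apply pow_nonzero; lra].
    apply continuous_Rpow, Hf'.
Qed.

End C2Inverse.

Definition is_diffeo (xl xr : Rbar) (G : R -> R) : Prop :=
  admissible_V xl xr G /\ forall y, Ydom xl xr G y <-> in_dom xl xr y.

Section Diffeo.
Variables xl xr : Rbar.
Local Notation D := (in_dom xl xr).
Local Notation admissible := (admissible_V xl xr).
Local Notation Ydom := (Ydom xl xr).

Lemma is_diffeo_maps G : is_diffeo xl xr G -> forall x, D x -> D (G x).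
Proof. intros [_ HG] x Hx; apply HG; exists x; auto. Qed.

Lemma admissible_comp V G : admissible V -> is_diffeo xl xr G -> admissible (fun x => V (G x)).
Proof.
  intros [V_incr [V_C2 V_pos]] HG; pose proof (is_diffeo_maps G HG) as G_maps.
  destruct HG as [[G_incr [G_C2 G_pos]] _].
  split; [| split].
  - intros x y Hx Hy Hxy; apply V_incr; auto.
  - exact (C2_on_comp D D V G (in_dom_open xl xr) V_C2 G_C2 G_maps).
  - intros x Hx; rewrite (Derive_comp_on D D V G V_C2 G_C2 G_maps x Hx).
    apply Rmult_lt_0_compat; auto.
Qed.

Lemma is_diffeo_inv_on_comp V W : admissible V -> admissible W ->
  (forall y, Ydom V y <-> Ydom W y) -> is_diffeo xl xr (fun x => inv_on W D (V x)).
Proof.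
  intros [V_incr [V_C2 V_pos]] [W_incr [W_C2 W_pos]] HVW.
  assert (HV : forall x, D x -> Ydom W (V x)) by (intros x Hx; apply HVW; exists x; auto).
  pose proof (C2_on_inv_on xl xr W W_incr W_C2 W_pos) as Winv_C2.
  split; [split; [| split] |].
  - intros x y Hx Hy Hxy; apply (inv_on_incr xl xr W W_incr); auto.
  - exact (C2_on_comp D (Ydom W) _ V (in_dom_open xl xr) Winv_C2 V_C2 HV).
  - intros x Hx; rewrite (Derive_comp_on D (Ydom W) _ V Winv_C2 V_C2 HV x Hx).
    rewrite (Derive_inv_on xl xr W W_incr W_C2 W_pos _ (HV x Hx)).
    destruct (inv_on_spec xl xr W _ (HV x Hx)) as [Hg _].
    apply Rmult_lt_0_compat; [apply Rinv_0_lt_compat |]; auto.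
  - intros y; split.
    + intros [x [Hx <-]]; apply (inv_on_spec xl xr W), HV, Hx.
    + intros Hy; destruct (proj2 (HVW (W y)) (ex_intro _ y (conj Hy eq_refl))) as [x [Hx Ex]].
      exists x; split; [exact Hx |]; rewrite Ex; apply (inv_on_cancel xl xr W W_incr), Hy.
Qed.

Lemma is_diffeo_inv_on G : is_diffeo xl xr G -> is_diffeo xl xr (inv_on G D).
Proof.
  intros [[G_incr [G_C2 G_pos]] HG].
  pose proof (C2_on_inv_on xl xr G G_incr G_C2 G_pos) as Ginv_C2.
  split; [split; [| split] |].
  - intros x y Hx Hy Hxy; apply (inv_on_incr xl xr G G_incr); auto; apply HG; auto.
  - intros y Hy; apply Ginv_C2, HG, Hy.
  - intros y Hy; rewrite (Derive_inv_on xl xr G G_incr G_C2 G_pos _ (proj2 (HG y) Hy)).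
    apply Rinv_0_lt_compat, G_pos, (inv_on_spec xl xr G), HG, Hy.
  - intros y; split.
    + intros [z [Hz <-]]; apply (inv_on_spec xl xr G), HG, Hz.
    + intros Hy; exists (G y).
      split; [apply HG; exists y; auto | apply (inv_on_cancel xl xr G G_incr), Hy].
Qed.

End Diffeo.

Section ImproperPrimitive.
Variables (xl xr : Rbar) (f : R -> R) (c : R).
Local Notation D := (in_dom xl xr).
Hypothesis c_in : D c.
Hypothesis f_cont : forall x, D x -> continuous f x.
Hypothesis f_int : ex_RInt_gen f (left_end xl) (right_end xr).

Let Chasles := RInt_Chasles_in_dom xl xr f f_cont.

Lemma filterlim_RInt_split :
  filterlim (fun ab : R * R => RInt f (fst ab) c + RInt f c (snd ab))
    (filter_prod (left_end xl) (right_end xr)) (locally (RInt_gen f (left_end xl) (right_end xr))).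
Proof.
  intros P HP.
  pose proof (@RInt_gen_correct R_CompleteNormedModule _ _ (Proper_StrongProper _ (left_end_proper xl))
                (Proper_StrongProper _ (right_end_proper xr)) f f_int P HP) as HfP.
  assert (HD : filter_prod (left_end xl) (right_end xr) (fun ab : R * R => D (fst ab) /\ D (snd ab))).
  { apply (Filter_prod _ _ _ (fun a => D a /\ a < c) (fun b => D b /\ c < b));
      [apply left_end_in_dom_lt | apply right_end_in_dom_gt | intros a b [Ha _] [Hb _]; split]; auto. }
  unfold filtermapi in HfP; unfold filtermap.
  eapply filter_imp; [| exact (filter_and _ _ HfP HD)].
  intros [a b] [[y [Hy Py]] [Ha Hb]]; simpl in *.
  rewrite (Chasles a c b Ha c_in Hb), (@is_RInt_unique R_CompleteNormedModule f a b y Hy); exact Py.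
Qed.

Lemma improper_primitive : exists m : R -> R,
  (forall x, D x -> is_RInt_gen f (left_end xl) (at_point x) (m x)) /\
  (forall x, D x -> is_derive m x (f x)) /\
  filterlim m (left_end xl) (locally 0) /\
  filterlim m (right_end xr) (locally (RInt_gen f (left_end xl) (right_end xr))).
Proof.
  set (L := RInt_gen f (left_end xl) (right_end xr)).
  destruct (filterlim_plus_prod_split _ _ (fun a => RInt f a c) (fun b => RInt f c b) L
              filterlim_RInt_split) as [m0 [Hleft Hright]].
  exists (fun x => m0 + RInt f c x); split; [| split; [| split]].
  - intros x Hx P HP.
    apply (Filter_prod _ _ _ (fun a => D a /\ P (RInt f a c + RInt f c x)) (fun b => b = x)).
    + apply filter_and;
        [exact (filter_imp _ _ (fun a H => proj1 H) (left_end_in_dom_lt xl xr c c_in)) |].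
      apply (filterlim_Rcomp _ _ (fun v => v + RInt f c x) m0 Hleft); [| exact HP].
      apply continuous_Rplus; [apply continuous_id | apply continuous_const].
    + reflexivity.
    + intros a b [Ha Pa] ->; exists (RInt f a x); split.
      * exact (@RInt_correct R_CompleteNormedModule f a x (ex_RInt_in_dom xl xr f f_cont a x Ha Hx)).
      * simpl; rewrite <- (Chasles a c x Ha c_in Hx); exact Pa.
  - intros x Hx; rewrite <- (Rplus_0_l (f x)).
    apply (is_derive_plus (fun _ => m0) (fun y => RInt f c y));
      [exact (@is_derive_const R_AbsRing R_NormedModule m0 x) |].
    exact (is_derive_RInt_in_dom xl xr f f_cont c x c_in Hx).
  - apply (filterlim_ext_loc (fun a => m0 - RInt f a c)).
    + eapply filter_imp; [| exact (left_end_in_dom_lt xl xr c c_in)]; intros a [Ha _].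
      pose proof (Chasles c a c c_in Ha c_in) as Hcac.
      rewrite RInt_point in Hcac; simpl in Hcac; unfold zero in Hcac; simpl in Hcac; lra.
    + replace 0 with (m0 - m0) by ring.
      apply (filterlim_Rcomp _ _ (fun v => m0 - v) m0 Hleft).
      apply (continuous_Rplus (fun _ => m0) (fun v => - v));
        [apply continuous_const | apply continuous_Ropp, continuous_id].
  - replace L with (m0 + (L - m0)) by ring.
    apply (filterlim_Rcomp _ _ (fun v => m0 + v) _ Hright).
    apply continuous_Rplus; [apply continuous_const | apply continuous_id].
Qed.

End ImproperPrimitive.

Lemma affine_unit_interval_id K c : 0 < K ->
  (forall u, (exists v, 0 < v < 1 /\ u = K * v + c) <-> 0 < u < 1) -> K = 1 /\ c = 0.
Proof.
  intros HK Himg.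
  assert (Hin : forall v, 0 < v < 1 -> 0 < K * v + c < 1) by (intros v Hv; apply Himg; exists v; auto).
  assert (Hout : forall u, 0 < u < 1 -> exists v, 0 < v < 1 /\ u = K * v + c)
    by (intros u Hu; apply Himg, Hu).
  assert (Hc : c = 0).
  { destruct (Rtotal_order c 0) as [Hc | [Hc | Hc]]; [exfalso | exact Hc | exfalso].
    - set (v := Rmin (1 / 2) (- c / (2 * K))).
      assert (Hv1 : v <= 1 / 2) by apply Rmin_l; assert (Hv2 : v <= - c / (2 * K)) by apply Rmin_r.
      assert (Hv0 : 0 < v) by (apply Rmin_pos; [lra | apply Rdiv_lt_0_compat; lra]).
      assert (HKv : K * v <= - c / 2).
      { apply Rle_trans with (K * (- c / (2 * K)));
          [apply Rmult_le_compat_l; lra | right; field; lra]. }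
      pose proof (Hin v ltac:(lra)); lra.
    - destruct (Hout (Rmin c 1 / 2)) as [v [Hv E]].
      + pose proof (Rmin_r c 1); assert (0 < Rmin c 1) by (apply Rmin_pos; lra); lra.
      + pose proof (Rmin_l c 1); nra. }
  subst c; split; [| reflexivity].
  destruct (Rtotal_order K 1) as [HK1 | [HK1 | HK1]]; [exfalso | exact HK1 | exfalso].
  - destruct (Hout ((K + 1) / 2) ltac:(lra)) as [v [Hv E]]; nra.
  - assert (HiK : 0 < / K < 1).
    { split; [apply Rinv_0_lt_compat; lra | rewrite <- Rinv_1; apply Rinv_lt_contravar; lra]. }
    pose proof (Hin ((/ K + 1) / 2) ltac:(lra)) as H.
    replace (K * ((/ K + 1) / 2) + 0) with ((1 + K) / 2) in H by (field; lra); lra.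
Qed.

Section Model.
Context {Theta : Type} {xl xr : Rbar} {xstar : R} {mu sig : Theta -> R -> R}.
Context (xstar_in : in_dom xl xr xstar).
Context (abc : forall th, assumptions_abc Theta xl xr xstar mu sig th).

Local Notation D := (in_dom xl xr).
Local Notation sig2 := (sig2 Theta sig).
Local Notation scale_dens := (scale_dens Theta xstar mu sig).
Local Notation speed := (speed_integrand Theta xstar mu sig).
Local Notation xi := (xi Theta xl xr xstar mu sig).
Local Notation fX := (fX Theta xl xr xstar mu sig).
Local Notation FX := (FX Theta xl xr xstar mu sig).
Local Notation FXinv := (FXinv Theta xl xr xstar mu sig).
Local Notation mu_bar := (mu_bar Theta xl xr xstar mu sig).
Local Notation sig_bar := (sig_bar Theta xl xr xstar mu sig).
Local Notation mu_Y := (mu_Y Theta xl xr mu sig).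
Local Notation sig_Y := (sig_Y Theta xl xr sig).
Local Notation obs_equiv := (obs_equiv Theta xl xr mu sig).
Local Notation admissible := (admissible_V xl xr).
Local Notation is_diffeo := (is_diffeo xl xr).
Local Notation Ydom := (Ydom xl xr).
Local Notation drift_ratio th := (fun z => 2 * mu th z / sig2 th z).

Lemma mu_C2 th : C2_on D (mu th).
Proof. exact (proj1 (abc th)). Qed.

Lemma sig2_C2 th : C2_on D (sig2 th).
Proof. destruct (abc th) as (_ & Hsig2 & _); exact Hsig2. Qed.

Lemma sig2_pos th x : D x -> 0 < sig2 th x.
Proof. destruct (abc th) as (_ & _ & Hpos & _); exact (Hpos x). Qed.

Lemma speed_ex_RInt_gen th : ex_RInt_gen (speed th) (left_end xl) (right_end xr).
Proof. destruct (abc th) as (_ & _ & _ & _ & _ & Hint); exact Hint. Qed.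

Lemma continuous_drift_ratio th x : D x -> continuous (drift_ratio th) x.
Proof.
  intros Hx; pose proof (sig2_pos th x Hx).
  apply continuous_Rmult.
  - apply continuous_Rmult; [apply continuous_const | apply (C2_on_continuous D _ (mu_C2 th) x Hx)].
  - apply continuous_Rinv_comp; [apply (C2_on_continuous D _ (sig2_C2 th) x Hx) | lra].
Qed.

Lemma is_derive_scale_dens th x : D x ->
  is_derive (scale_dens th) x (- (2 * mu th x / sig2 th x) * scale_dens th x).
Proof.
  intros Hx; rewrite Rmult_comm.
  apply (is_derive_Rcomp exp (fun y => - RInt (drift_ratio th) xstar y)); [apply is_derive_exp |].
  apply (is_derive_opp (fun y => RInt (drift_ratio th) xstar y)).
  exact (is_derive_RInt_in_dom xl xr _ (continuous_drift_ratio th) xstar x xstar_in Hx).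
Qed.

Lemma C1_on_scale_dens th : C1_on D (scale_dens th).
Proof.
  apply (C1_on_of_is_derive D (in_dom_open xl xr) _ _ (is_derive_scale_dens th)).
  intros x Hx; apply continuous_Rmult.
  - apply continuous_Ropp, continuous_drift_ratio, Hx.
  - apply ex_derive_continuous_R; eexists; apply is_derive_scale_dens, Hx.
Qed.

Lemma speed_pos th x : D x -> 0 < speed th x.
Proof.
  intros Hx; apply Rinv_0_lt_compat, Rmult_lt_0_compat; [apply sig2_pos, Hx | apply exp_pos].
Qed.

Lemma C1_on_speed th : C1_on D (speed th).
Proof.
  apply (C1_on_inv D (in_dom_open xl xr) (fun x => sig2 th x * scale_dens th x)).
  - apply (C1_on_mult D (in_dom_open xl xr)); [apply C1_on_of_C2_on, sig2_C2 | apply C1_on_scale_dens].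
  - intros x Hx; apply Rgt_not_eq, Rmult_lt_0_compat; [apply sig2_pos, Hx | apply exp_pos].
Qed.

Lemma continuous_speed th x : D x -> continuous (speed th) x.
Proof. intros Hx; apply ex_derive_continuous_R, (C1_on_speed th x Hx). Qed.

Lemma FX_speed_measure th : exists m : R -> R,
  (forall x, D x -> FX th x = xi th * m x) /\
  (forall x, D x -> is_derive m x (speed th x)) /\
  filterlim m (left_end xl) (locally 0) /\
  filterlim m (right_end xr) (locally (/ xi th)).
Proof.
  destruct (improper_primitive xl xr (speed th) xstar xstar_in (continuous_speed th)
              (speed_ex_RInt_gen th)) as [m [Hm [Hder [Hl Hr]]]].
  exists m; split; [| split; [exact Hder | split; [exact Hl |]]].
  - intros x Hx.
    apply (@is_RInt_gen_unique R_CompleteNormedModule _ _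
             (Proper_StrongProper _ (left_end_proper xl)) (Proper_StrongProper _ (at_point_filter x))).
    exact (is_RInt_gen_scal (speed th) (xi th) (m x) (Hm x Hx)).
  - unfold Defs.xi; rewrite Rinv_inv; exact Hr.
Qed.

Lemma xi_pos th : 0 < xi th.
Proof.
  destruct (FX_speed_measure th) as [m [_ [Hder [Hl Hr]]]].
  assert (m_incr := incr_on_of_is_derive_pos xl xr m _ Hder (speed_pos th)).
  assert (Hm : Ydom m (m xstar)) by (exists xstar; auto).
  apply (Ydom_limits xl xr m m_incr (fun x Hx => ex_derive_continuous_R m x (ex_intro _ _ (Hder x Hx)))
           xstar 0 (/ xi th) xstar_in Hl Hr) in Hm.
  rewrite <- (Rinv_inv (xi th)); apply Rinv_0_lt_compat; lra.
Qed.

Lemma fX_pos th x : D x -> 0 < fX th x.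
Proof. intros Hx; apply Rmult_lt_0_compat; [apply xi_pos | apply speed_pos, Hx]. Qed.

Lemma is_derive_FX th x : D x -> is_derive (FX th) x (fX th x).
Proof.
  intros Hx; destruct (FX_speed_measure th) as [m [HFX [Hder _]]].
  apply (is_derive_ext_loc (fun y => xi th * m y)).
  - apply (locally_of_open D); [apply in_dom_open | exact Hx |]; intros y Hy; symmetry; apply HFX, Hy.
  - apply is_derive_scal, Hder, Hx.
Qed.

Lemma Derive_FX th x : D x -> Derive (FX th) x = fX th x.
Proof. intros Hx; apply is_derive_unique, is_derive_FX, Hx. Qed.

Lemma Derive2_FX th x : D x -> Derive_n (FX th) 2 x = Derive (fX th) x.
Proof.
  intros Hx; apply Derive_ext_loc.
  apply (locally_of_open D); [apply in_dom_open | exact Hx |]; intros y Hy; apply Derive_FX, Hy.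
Qed.

Lemma admissible_FX th : admissible (FX th).
Proof.
  split; [| split].
  - exact (incr_on_of_is_derive_pos xl xr _ _ (is_derive_FX th) (fX_pos th)).
  - apply (C2_on_of_is_derive_C1 D (in_dom_open xl xr) _ _ (is_derive_FX th)).
    apply (C1_on_scal D (in_dom_open xl xr)), C1_on_speed.
  - intros x Hx; rewrite Derive_FX by exact Hx; apply fX_pos, Hx.
Qed.

Lemma Ydom_FX th u : Ydom (FX th) u <-> 0 < u < 1.
Proof.
  destruct (FX_speed_measure th) as [m [HFX [_ [Hl Hr]]]]; pose proof (xi_pos th).
  assert (Hlim : forall (F : (R -> Prop) -> Prop) l, Filter F -> F D ->
                   filterlim m F (locally l) -> filterlim (FX th) F (locally (xi th * l))).
  { intros F l FF HD Hm; apply (filterlim_ext_loc (fun x => xi th * m x)).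
    - apply (filter_imp D); [intros x Hx; symmetry; apply HFX, Hx | exact HD].
    - apply (filterlim_Rcomp F m (fun v => xi th * v) l Hm), continuous_Rmult;
        [apply continuous_const | apply continuous_id]. }
  destruct (admissible_FX th) as [FX_incr [FX_C2 _]].
  apply (Ydom_limits xl xr (FX th) FX_incr (C2_on_continuous D _ FX_C2) xstar 0 1 xstar_in).
  - rewrite <- (Rmult_0_r (xi th)); apply Hlim; [apply left_end_proper | | exact Hl].
    exact (filter_imp _ _ (fun x Hx => proj1 Hx) (left_end_in_dom_lt xl xr xstar xstar_in)).
  - rewrite <- (Rinv_r (xi th)) by lra; apply Hlim; [apply right_end_proper | | exact Hr].
    exact (filter_imp _ _ (fun x Hx => proj1 Hx) (right_end_in_dom_gt xl xr xstar xstar_in)).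
Qed.

(* By Ito's formula, the drift and diffusion of [T(X)] at [T(x)]. *)
Definition ito_drift th (T : R -> R) x := Derive T x * mu th x + / 2 * Derive_n T 2 x * sig2 th x.
Definition ito_diffusion th (T : R -> R) x := Derive T x * sig th x.

Definition transports th th' (G : R -> R) : Prop :=
  forall x, D x -> mu th' (G x) = ito_drift th G x /\ sig th' (G x) = ito_diffusion th G x.

Lemma ito_chain_algebra h1 h2 g1 g2 m s m' s' : h1 <> 0 ->
  (h1 * g1 * m + / 2 * (h2 * g1 ^ 2 + h1 * g2) * s ^ 2 = h1 * m' + / 2 * h2 * s' ^ 2 /\
   h1 * g1 * s = h1 * s') <->
  (m' = g1 * m + / 2 * g2 * s ^ 2 /\ s' = g1 * s).
Proof.
  intros Hh1; split; [intros [Hm Hs] | intros [-> ->]; split; ring].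
  assert (Hs' : s' = g1 * s) by (apply (Rmult_eq_reg_l h1); [lra | exact Hh1]).
  split; [| exact Hs']; subst s'; apply (Rmult_eq_reg_l h1); [lra | exact Hh1].
Qed.

Lemma ito_comp_iff th th' (K H G : R -> R) x :
  C2_on D H -> C2_on D G -> (forall y, D y -> D (G y)) -> (forall y, D y -> K y = H (G y)) ->
  D x -> Derive H (G x) <> 0 ->
  (ito_drift th K x = ito_drift th' H (G x) /\ ito_diffusion th K x = ito_diffusion th' H (G x)) <->
  (mu th' (G x) = ito_drift th G x /\ sig th' (G x) = ito_diffusion th G x).
Proof.
  intros H_C2 G_C2 G_maps HK Hx HH.
  assert (HKloc : locally x (fun y => K y = H (G y)))
    by exact (locally_of_open D _ x (in_dom_open xl xr) Hx HK).
  assert (HK1 : Derive K x = Derive H (G x) * Derive G x).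
  { transitivity (Derive (fun y => H (G y)) x); [apply Derive_ext_loc, HKloc |].
    exact (Derive_comp_on D D H G H_C2 G_C2 G_maps x Hx). }
  assert (HK2 : Derive_n K 2 x = Derive_n H 2 (G x) * Derive G x ^ 2 + Derive H (G x) * Derive_n G 2 x).
  { transitivity (Derive_n (fun y => H (G y)) 2 x); [apply Derive_n_ext_loc, HKloc |].
    exact (Derive2_comp_on D D H G (in_dom_open xl xr) H_C2 G_C2 G_maps x Hx). }
  unfold ito_drift, ito_diffusion, Defs.sig2; rewrite HK1, HK2.
  exact (ito_chain_algebra _ _ _ _ _ _ _ _ HH).
Qed.

Lemma bar_coeffs_FX th x : D x ->
  mu_bar th (FX th x) = ito_drift th (FX th) x /\
  sig_bar th (FX th x) = ito_diffusion th (FX th) x.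
Proof.
  intros Hx; unfold Defs.mu_bar, Defs.sig_bar, Defs.FXinv, ito_drift, ito_diffusion.
  destruct (admissible_FX th) as [FX_incr _].
  rewrite (inv_on_cancel xl xr _ FX_incr x Hx), Derive2_FX, Derive_FX by exact Hx.
  split; ring.
Qed.

Lemma Y_coeffs_V th V x : admissible V -> D x ->
  mu_Y th V (V x) = ito_drift th V x /\
  sig_Y th V (V x) = ito_diffusion th V x.
Proof.
  intros [V_incr [V_C2 V_pos]] Hx; unfold Defs.mu_Y, Defs.sig_Y, Uinv, ito_drift, ito_diffusion.
  assert (HVx : Ydom V (V x)) by (exists x; auto).
  rewrite (Derive2_inv_on xl xr V V_incr V_C2 V_pos _ HVx).
  rewrite (Derive_inv_on xl xr V V_incr V_C2 V_pos _ HVx).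
  rewrite (inv_on_cancel xl xr V V_incr x Hx).
  pose proof (V_pos x Hx); split; field; lra.
Qed.

Lemma transports_scale_dens th th' G : is_diffeo G -> transports th th' G ->
  exists C, 0 < C /\ forall x, D x -> Derive G x * scale_dens th' (G x) = C * scale_dens th x.
Proof.
  intros HG HT; pose proof (is_diffeo_maps xl xr G HG) as G_maps.
  destruct HG as [[_ [G_C2 G_pos]] _].
  set (I th y := RInt (drift_ratio th) xstar y).
  assert (HI : forall th y, D y -> is_derive (I th) y (drift_ratio th y)).
  { intros th0 y Hy.
    exact (is_derive_RInt_in_dom xl xr _ (continuous_drift_ratio th0) xstar y xstar_in Hy). }
  (* [phi = ln (G' * (s_th' o G) / s_th)]; the transport equations make it constant. *)
  set (phi x := ln (Derive G x) - I th' (G x) + I th x).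
  assert (Hphi' : forall x, D x -> is_derive phi x 0).
  { intros x Hx; pose proof (G_pos x Hx); pose proof (sig2_pos th x Hx).
    assert (Hsig : sig th x <> 0) by (intros Hs; unfold Defs.sig2 in *; rewrite Hs in *; lra).
    assert (Hzero : / Derive G x * Derive_n G 2 x - drift_ratio th' (G x) * Derive G x
                    + drift_ratio th x = 0).
    { destruct (HT x Hx) as [Hmu Hs]; cbv beta; unfold Defs.sig2 in *.
      rewrite Hmu, Hs; unfold ito_drift, ito_diffusion, Defs.sig2; field; lra. }
    rewrite <- Hzero.
    apply (is_derive_plus (fun x => ln (Derive G x) - I th' (G x)) (I th)); [| apply HI, Hx].
    apply (is_derive_minus (fun x => ln (Derive G x)) (fun x => I th' (G x))).
    - apply is_derive_Rcomp; [apply is_derive_ln, G_pos, Hx | apply (C2_on_is_derive2 D G G_C2 x Hx)].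
    - apply is_derive_Rcomp; [apply HI, G_maps, Hx | apply (C2_on_is_derive D G G_C2 x Hx)]. }
  exists (exp (phi xstar)); split; [apply exp_pos |]; intros x Hx.
  change (Derive G x * exp (- I th' (G x)) = exp (phi xstar) * exp (- I th x)).
  rewrite <- (exp_ln (Derive G x)) by (apply G_pos, Hx); rewrite <- !exp_plus; f_equal.
  rewrite <- (eq_is_derive_in_dom xl xr phi x xstar Hphi' Hx xstar_in); unfold phi; ring.
Qed.

Lemma transports_density th th' G : is_diffeo G -> transports th th' G ->
  exists K, 0 < K /\ forall x, D x -> fX th' (G x) * Derive G x = K * fX th x.
Proof.
  intros HG HT; destruct (transports_scale_dens th th' G HG HT) as [C [HC Hs]].
  pose proof (xi_pos th); pose proof (xi_pos th').
  exists (xi th' / (C * xi th)); split; [apply Rdiv_lt_0_compat; nra |]; intros x Hx.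
  destruct HG as [[_ [_ G_pos]] _]; pose proof (G_pos x Hx); pose proof (sig2_pos th x Hx).
  assert (Hsd : 0 < scale_dens th x) by apply exp_pos.
  assert (Hsd' : scale_dens th' (G x) = C * scale_dens th x / Derive G x)
    by (rewrite <- (Hs x Hx); field; lra).
  assert (Hsig2 : sig2 th' (G x) = Derive G x ^ 2 * sig2 th x)
    by (unfold Defs.sig2; rewrite (proj2 (HT x Hx)); unfold ito_diffusion; ring).
  unfold Defs.fX; rewrite Hsd', Hsig2; field; repeat split; lra.
Qed.

Lemma transports_FX_affine th th' G : is_diffeo G -> transports th th' G ->
  exists K c, 0 < K /\ forall x, D x -> FX th' (G x) = K * FX th x + c.
Proof.
  intros HG HT; pose proof (is_diffeo_maps xl xr G HG) as G_maps.
  destruct (transports_density th th' G HG HT) as [K [HK Hf]].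
  exists K, (FX th' (G xstar) - K * FX th xstar); split; [exact HK |]; intros x Hx.
  assert (Hconst : forall y, D y -> is_derive (fun y => FX th' (G y) - K * FX th y) y 0).
  { intros y Hy; rewrite <- (Rminus_diag_eq _ _ (Hf y Hy)).
    apply (is_derive_minus (fun y => FX th' (G y)) (fun y => K * FX th y)).
    - apply is_derive_Rcomp; [apply is_derive_FX, G_maps, Hy |].
      destruct HG as [[_ [G_C2 _]] _]; apply (C2_on_is_derive D G G_C2 y Hy).
    - apply is_derive_scal, is_derive_FX, Hy. }
  pose proof (eq_is_derive_in_dom xl xr _ x xstar Hconst Hx xstar_in); simpl in *; lra.
Qed.

Lemma transports_FX th th' G : is_diffeo G -> transports th th' G ->
  forall x, D x -> FX th' (G x) = FX th x.
Proof.
  intros HG HT; pose proof (is_diffeo_maps xl xr G HG) as G_maps.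
  destruct (transports_FX_affine th th' G HG HT) as [K [c [HK Haff]]].
  assert (Himg : forall u, (exists v, 0 < v < 1 /\ u = K * v + c) <-> 0 < u < 1).
  { intros u; rewrite <- (Ydom_FX th'); split.
    - intros [v [Hv ->]]; destruct (proj2 (Ydom_FX th v) Hv) as [x [Hx <-]].
      exists (G x); split; [apply G_maps, Hx | apply Haff, Hx].
    - intros [y [Hy <-]]; destruct (proj2 (proj2 HG y) Hy) as [x [Hx <-]].
      exists (FX th x); split; [apply (Ydom_FX th); exists x; auto | apply Haff, Hx]. }
  destruct (affine_unit_interval_id K c HK Himg) as [-> ->].
  intros x Hx; rewrite Haff by exact Hx; ring.
Qed.

Lemma transports_self_id th G : is_diffeo G -> transports th th G -> forall x, D x -> G x = x.
Proof.
  intros HG HT x Hx; destruct (admissible_FX th) as [FX_incr _].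
  exact (incr_on_inj xl xr _ FX_incr _ _ (is_diffeo_maps xl xr G HG x Hx) Hx
           (transports_FX th th G HG HT x Hx)).
Qed.

Definition bar_equiv th th' : Prop := forall u, 0 < u < 1 ->
  mu_bar th u = mu_bar th' u /\
  sig_bar th u = sig_bar th' u.

Lemma bar_equiv_iff_transports th th' G : is_diffeo G ->
  (forall x, D x -> FX th' (G x) = FX th x) -> (bar_equiv th th' <-> transports th th' G).
Proof.
  intros HG HFG; pose proof (is_diffeo_maps xl xr G HG) as G_maps; destruct HG as [[_ [G_C2 _]] _].
  assert (Hat : forall x, D x ->
    (mu_bar th (FX th x) = mu_bar th' (FX th x) /\
     sig_bar th (FX th x) = sig_bar th' (FX th x)) <->
    (mu th' (G x) = ito_drift th G x /\ sig th' (G x) = ito_diffusion th G x)).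
  { intros x Hx; destruct (bar_coeffs_FX th x Hx) as [-> ->].
    rewrite <- (HFG x Hx); destruct (bar_coeffs_FX th' (G x) (G_maps x Hx)) as [-> ->].
    destruct (admissible_FX th') as [_ [FX_C2 FX_pos]].
    apply (ito_comp_iff th th' (FX th) (FX th') G x FX_C2 G_C2 G_maps); [| exact Hx |].
    - intros y Hy; symmetry; apply HFG, Hy.
    - specialize (FX_pos (G x) (G_maps x Hx)); lra. }
  split.
  - intros Hbar x Hx; apply Hat, Hbar; [exact Hx |]; apply (Ydom_FX th); exists x; auto.
  - intros HT u Hu; destruct (proj2 (Ydom_FX th u) Hu) as [x [Hx <-]]; apply Hat, HT; exact Hx.
Qed.

Lemma bar_equiv_of_transports th th' G : is_diffeo G -> transports th th' G -> bar_equiv th th'.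
Proof.
  intros HG HT; apply (bar_equiv_iff_transports th th' G HG (transports_FX th th' G HG HT)), HT.
Qed.

Lemma transports_of_bar_equiv th th' :
  bar_equiv th th' -> exists G, is_diffeo G /\ transports th th' G.
Proof.
  intros Hbar; exists (fun x => FXinv th' (FX th x)).
  assert (HG : is_diffeo (fun x => FXinv th' (FX th x))).
  { apply is_diffeo_inv_on_comp; [apply admissible_FX | apply admissible_FX |].
    intros y; rewrite !Ydom_FX; reflexivity. }
  split; [exact HG |]; apply (bar_equiv_iff_transports th th' _ HG); [| exact Hbar].
  intros x Hx; apply (inv_on_spec xl xr _), (Ydom_FX th'), (Ydom_FX th); exists x; auto.
Qed.

Lemma obs_coeffs_iff th th' V W G x : admissible V -> admissible W ->
  is_diffeo G -> (forall y, D y -> W (G y) = V y) -> D x ->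
  ((mu_Y th V (V x) = mu_Y th' W (V x) /\
    sig_Y th V (V x) = sig_Y th' W (V x)) <->
   (mu th' (G x) = ito_drift th G x /\ sig th' (G x) = ito_diffusion th G x)).
Proof.
  intros HV HW HG HWG Hx; pose proof (is_diffeo_maps xl xr G HG) as G_maps.
  destruct (Y_coeffs_V th V x HV Hx) as [-> ->].
  rewrite <- (HWG x Hx); destruct (Y_coeffs_V th' W (G x) HW (G_maps x Hx)) as [-> ->].
  destruct HV as [_ [V_C2 _]], HW as [_ [W_C2 W_pos]], HG as [[_ [G_C2 _]] _].
  apply (ito_comp_iff th th' V W G x W_C2 G_C2 G_maps); [| exact Hx |].
  - intros y Hy; symmetry; apply HWG, Hy.
  - specialize (W_pos (G x) (G_maps x Hx)); lra.
Qed.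

Lemma transports_of_obs_equiv th th' V W : admissible V -> admissible W ->
  obs_equiv th V th' W ->
  exists G, is_diffeo G /\ transports th th' G /\ forall x, D x -> W (G x) = V x.
Proof.
  intros HV HW [Hdom Hcoef].
  pose proof (is_diffeo_inv_on_comp xl xr V W HV HW Hdom) as HG.
  assert (HWG : forall x, D x -> W (inv_on W D (V x)) = V x).
  { intros x Hx; apply (inv_on_spec xl xr W), Hdom; exists x; auto. }
  exists (fun x => inv_on W D (V x)); split; [exact HG | split; [| exact HWG]].
  intros x Hx; apply (obs_coeffs_iff th th' V W _ x HV HW HG HWG Hx), Hcoef; exists x; auto.
Qed.

Lemma obs_equiv_of_transports th th' V G : admissible V -> is_diffeo G ->
  transports th th' G -> exists W, admissible W /\ obs_equiv th V th' W.
Proof.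
  intros HV HG HT; pose proof (is_diffeo_inv_on xl xr G HG) as HGi.
  pose proof (is_diffeo_maps xl xr G HG) as G_maps; pose proof (is_diffeo_maps xl xr _ HGi) as Gi_maps.
  pose proof (proj1 (proj1 HG)) as G_incr.
  assert (HWG : forall x, D x -> V (inv_on G D (G x)) = V x)
    by (intros x Hx; rewrite (inv_on_cancel xl xr G G_incr x Hx); reflexivity).
  exists (fun y => V (inv_on G D y)); split; [exact (admissible_comp xl xr V _ HV HGi) | split].
  - intros y; split.
    + intros [x [Hx <-]]; exists (G x); split; [apply G_maps, Hx | apply HWG, Hx].
    + intros [z [Hz <-]]; exists (inv_on G D z); split; [apply Gi_maps, Hz | reflexivity].
  - intros y [x [Hx <-]].
    apply (obs_coeffs_iff th th' V _ G x HV (admissible_comp xl xr V _ HV HGi) HG HWG Hx), HT, Hx.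
Qed.

End Model.

Theorem corollary6 (Theta : Type) (xl xr : Rbar) (xstar : R)
  (mu sig : Theta -> R -> R) (theta : Theta) (V : R -> R) :
  Rbar_lt xl xr ->
  in_dom xl xr xstar ->
  (forall th : Theta, assumptions_abc Theta xl xr xstar mu sig th) ->
  admissible_V xl xr V ->
  identified Theta xl xr mu sig theta V <->
  (forall th' : Theta,
     (forall u, 0 < u < 1 ->
        mu_bar Theta xl xr xstar mu sig theta u = mu_bar Theta xl xr xstar mu sig th' u /\
        sig_bar Theta xl xr xstar mu sig theta u = sig_bar Theta xl xr xstar mu sig th' u)
     <-> theta = th').
Proof.
  (* [Rbar_lt xl xr] is implied by [in_dom xl xr xstar]. *)
  intros _ Hstar Habc HV; split.
  - intros Hid th'; split; [| intros <- u _; split; reflexivity].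
    intros Hbar; destruct (transports_of_bar_equiv Hstar Habc theta th' Hbar) as [G [HG HT]].
    destruct (obs_equiv_of_transports theta th' V G HV HG HT) as [W [HW Hobs]].
    exact (proj1 (Hid th' W HW Hobs)).
  - intros Hinj th' W HW Hobs.
    destruct (transports_of_obs_equiv theta th' V W HV HW Hobs) as [G [HG [HT HWG]]].
    assert (Heq : theta = th')
      by exact (proj1 (Hinj th') (bar_equiv_of_transports Hstar Habc theta th' G HG HT)).
    subst th'.
    split; [reflexivity |]; intros x Hx.
    rewrite <- (HWG x Hx), (transports_self_id Hstar Habc theta G HG HT x Hx); reflexivity.
Qed.
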